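(* Let $f\colon[0,1]\to\mathbb{R}_{\ge 0}$ be Riemann-integrable, let $\delta\in(0,1)$ and $0<\beta<\alpha\le 1$. Assume $\int_0^1(1-\theta^\alpha) f(\theta)\,\mathrm{d}\theta>0$. Then $$\frac{\int_0^\delta (1-\theta^\alpha) f(\theta)\,\mathrm{d}\theta}{\int_0^1 (1-\theta^\alpha) f(\theta)\,\mathrm{d}\theta}\ \le\ \frac{\int_0^\delta (1-\theta^\beta) f(\theta)\,\mathrm{d}\theta}{\int_0^1 (1-\theta^\beta) f(\theta)\,\mathrm{d}\theta}.$$ *)

From Stdlib Require Import Reals.
From Coquelicot Require Import Coquelicot.
Open Scope R_scope.

(* Real power theta^a for theta >= 0 and a > 0, with the convention 0^a = 0
   (Stdlib's Rpower 0 a evaluates to 1, which is not the intended value). *)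
Definition rpow (theta a : R) : R :=
  if Rle_dec theta 0 then 0 else Rpower theta a.

(* Write w_s(t) = 1 - t^s.  Concavity of u |-> u^(beta/alpha), applied to u = t^alpha, makes
   w_beta / w_alpha nonincreasing on [0, 1).  Hence, with p = w_alpha(delta) and
   q = w_beta(delta), q w_alpha f <= p w_beta f below delta and the reverse inequality holds
   above delta; splitting both integrals at delta and cross-multiplying gives the claim.
   Integrability of w_s f follows from approximating w_s uniformly by step functions,
   t |-> t^s being s-Holder continuous. *)

From Stdlib Require Import Reals Lra Lia ClassicalEpsilon.
From Coquelicot Require Import Coquelicot.
Open Scope R_scope.

Lemma rpow_pos x a : 0 < x -> rpow x a = exp (a * ln x).
Proof. intros hx; unfold rpow, Rpower; destruct (Rle_dec x 0); [lra | reflexivity]. Qed.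

Lemma rpow_0_l a : rpow 0 a = 0.
Proof. unfold rpow; destruct (Rle_dec 0 0); [reflexivity | lra]. Qed.

Lemma rpow_1_l a : rpow 1 a = 1.
Proof. rewrite rpow_pos, ln_1, Rmult_0_r, exp_0 by lra; reflexivity. Qed.

Lemma rpow_ge_0 x a : 0 <= rpow x a.
Proof. unfold rpow, Rpower; destruct (Rle_dec x 0); [lra | left; apply exp_pos]. Qed.

Lemma rpow_mult_distr x y a : 0 <= x -> 0 <= y -> rpow (x * y) a = rpow x a * rpow y a.
Proof.
  intros hx hy.
  destruct (Req_dec x 0) as [-> | nx]; [rewrite Rmult_0_l, rpow_0_l; ring |].
  destruct (Req_dec y 0) as [-> | ny]; [rewrite Rmult_0_r, rpow_0_l; ring |].
  rewrite !rpow_pos, ln_mult, <- exp_plus by nra.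
  f_equal; ring.
Qed.

Lemma rpow_rpow x a b : 0 <= x -> rpow (rpow x a) b = rpow x (a * b).
Proof.
  intros hx; destruct (Req_dec x 0) as [-> | nx]; [rewrite !rpow_0_l; reflexivity |].
  rewrite (rpow_pos x), rpow_pos, ln_exp, rpow_pos by (try apply exp_pos; lra).
  f_equal; ring.
Qed.

Lemma rpow_le_compat x y a : 0 < a -> 0 <= x <= y -> rpow x a <= rpow y a.
Proof.
  intros ha [hx hxy]; destruct (Req_dec x 0) as [-> | nx].
  - rewrite rpow_0_l; apply rpow_ge_0.
  - rewrite !rpow_pos by lra.
    apply (Rle_Rpower_l x y a); lra.
Qed.

Lemma rpow_lt_1 x a : 0 < a -> 0 <= x < 1 -> rpow x a < 1.
Proof.
  intros ha hx; destruct (Req_dec x 0) as [-> | nx]; [rewrite rpow_0_l; lra |].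
  rewrite rpow_pos, <- exp_0 by lra; apply exp_increasing.
  assert (ln x < 0) by (rewrite <- ln_1; apply ln_increasing; lra).
  nra.
Qed.

Lemma rpow_le_1 x a : 0 < a -> 0 <= x <= 1 -> rpow x a <= 1.
Proof.
  intros ha hx; destruct (Req_dec x 1) as [-> | nx]; [rewrite rpow_1_l; lra |].
  left; apply rpow_lt_1; lra.
Qed.

Lemma Rdiv_unit_interval w s : 0 < s -> 0 <= w <= s -> 0 <= w / s <= 1.
Proof.
  intros hs hw; split; [apply Rdiv_le_0_compat | apply (Rdiv_le_1 w s)]; lra.
Qed.

(* Average, with weights [p] and [1 - p], the tangent-line bounds for [exp] at [p ln s]
   evaluated at [ln s] and at [0]. *)
Lemma rpow_le_bernoulli s p : 0 <= s -> 0 <= p <= 1 -> rpow s p <= p * s + 1 - p.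
Proof.
  intros hs hp; destruct (Req_dec s 0) as [-> | ns]; [rewrite rpow_0_l; lra |].
  rewrite rpow_pos by lra; set (z := p * ln s).
  assert (tangent : forall y, exp z * (1 + y - z) <= exp y).
  { intros y; replace (exp y) with (exp z * exp (y - z)) by (rewrite <- exp_plus; f_equal; ring).
    apply Rmult_le_compat_l; [left; apply exp_pos |].
    pose proof (exp_ineq1_le (y - z)); lra. }
  pose proof (tangent (ln s)) as at_ln_s; rewrite exp_ln in at_ln_s by lra.
  pose proof (tangent 0) as at_0; rewrite exp_0 in at_0.
  assert (exp z = p * (exp z * (1 + ln s - z)) + (1 - p) * (exp z * (1 + 0 - z)))
    by (unfold z; ring).
  nra.
Qed.

Lemma rpow_concave x y l p : 0 <= x -> 0 <= y -> 0 <= l <= 1 -> 0 <= p <= 1 ->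
  l * rpow x p + (1 - l) * rpow y p <= rpow (l * x + (1 - l) * y) p.
Proof.
  intros hx hy hl hp; set (z := l * x + (1 - l) * y).
  assert (0 <= l * x) by (apply Rmult_le_pos; lra).
  assert (0 <= (1 - l) * y) by (apply Rmult_le_pos; lra).
  destruct (Req_dec z 0) as [z0 | nz].
  - assert (weight_0 : forall w u, w * u = 0 -> w * rpow u p = 0).
    { intros w u wu0; destruct (Rmult_integral _ _ wu0) as [-> | ->];
        [ring | rewrite rpow_0_l; ring]. }
    rewrite (weight_0 l x), (weight_0 (1 - l) y) by (unfold z in z0; lra).
    pose proof (rpow_ge_0 z p); lra.
  - assert (zpos : 0 < z) by (unfold z in *; lra).
    assert (chord : forall u, 0 <= u -> rpow u p <= rpow z p * (p * (u / z) + 1 - p)).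
    { intros u hu; replace u with (z * (u / z)) at 1 by (field; lra).
      assert (0 <= u / z) by (apply Rdiv_le_0_compat; lra).
      rewrite rpow_mult_distr by lra.
      apply Rmult_le_compat_l; [apply rpow_ge_0 | apply rpow_le_bernoulli; lra]. }
    assert (l * rpow x p <= l * (rpow z p * (p * (x / z) + 1 - p)))
      by (apply Rmult_le_compat_l; [lra | apply chord; lra]).
    assert ((1 - l) * rpow y p <= (1 - l) * (rpow z p * (p * (y / z) + 1 - p)))
      by (apply Rmult_le_compat_l; [lra | apply chord; lra]).
    assert (l * (rpow z p * (p * (x / z) + 1 - p))
            + (1 - l) * (rpow z p * (p * (y / z) + 1 - p)) = rpow z p)
      by (unfold z in *; field; lra).
    lra.
Qed.

Lemma rpow_subadditive u v a : 0 <= u -> 0 <= v -> 0 < a <= 1 ->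
  rpow (u + v) a <= rpow u a + rpow v a.
Proof.
  intros hu hv ha; destruct (Req_dec (u + v) 0) as [s0 | ns].
  - replace u with 0 by lra; replace v with 0 by lra.
    rewrite Rplus_0_l, rpow_0_l; lra.
  - set (s := u + v); assert (0 < s) by (unfold s; lra).
    assert (share : forall w, 0 <= w <= s -> w / s * rpow s a <= rpow w a).
    { intros w hw.
      assert (0 <= w / s <= 1) by (apply Rdiv_unit_interval; lra).
      pose proof (rpow_concave s 0 (w / s) a) as conc.
      rewrite rpow_0_l, Rmult_0_r, !Rplus_0_r in conc.
      replace (w / s * s) with w in conc by (field; lra).
      apply conc; lra. }
    pose proof (share u ltac:(unfold s; lra)); pose proof (share v ltac:(unfold s; lra)).
    replace (rpow s a) with (u / s * rpow s a + v / s * rpow s a) by (unfold s; field; lra).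
    lra.
Qed.

Lemma rpow_Rabs_minus_le x y a : 0 <= x -> 0 <= y -> 0 < a <= 1 ->
  Rabs (rpow x a - rpow y a) <= rpow (Rabs (x - y)) a.
Proof.
  intros hx hy ha.
  assert (ordered : forall u v, 0 <= u <= v ->
            Rabs (rpow u a - rpow v a) <= rpow (Rabs (u - v)) a).
  { intros u v huv; pose proof (rpow_le_compat u v a ltac:(lra) huv).
    pose proof (rpow_subadditive u (v - u) a ltac:(lra) ltac:(lra) ha).
    replace (u + (v - u)) with v in * by ring.
    rewrite Rabs_left1, (Rabs_left1 (u - v)), !Ropp_minus_distr by lra; lra. }
  destruct (Rle_dec x y); [apply ordered; lra |].
  rewrite Rabs_minus_sym, (Rabs_minus_sym x); apply ordered; lra.
Qed.

Lemma rpow_chord_antitone u v p : 0 <= u <= v -> v < 1 -> 0 <= p <= 1 ->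
  (1 - rpow v p) * (1 - u) <= (1 - rpow u p) * (1 - v).
Proof.
  intros huv hv hp; set (l := (1 - v) / (1 - u)).
  assert (0 <= l <= 1) by (apply Rdiv_unit_interval; lra).
  pose proof (rpow_concave u 1 l p ltac:(lra) ltac:(lra) ltac:(lra) hp) as conc.
  replace (l * u + (1 - l) * 1) with v in conc by (unfold l; field; lra).
  rewrite rpow_1_l in conc.
  assert (l * (1 - u) = 1 - v) by (unfold l; field; lra).
  nra.
Qed.

Lemma one_sub_rpow_ratio_antitone x y alpha beta :
  0 <= x <= y -> y < 1 -> 0 < beta <= alpha ->
  (1 - rpow y beta) * (1 - rpow x alpha) <= (1 - rpow x beta) * (1 - rpow y alpha).
Proof.
  intros hxy hy hba.
  replace beta with (alpha * (beta / alpha)) by (field; lra).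
  rewrite <- !(rpow_rpow _ alpha) by lra.
  apply rpow_chord_antitone.
  - split; [apply rpow_ge_0 | apply rpow_le_compat; lra].
  - apply rpow_lt_1; lra.
  - apply Rdiv_unit_interval; lra.
Qed.

Lemma ex_RInt_of_uniform_approx (g : R -> R) (a b : R) : a <= b ->
  (forall eps, 0 < eps -> exists G, ex_RInt G a b /\
     forall t, a <= t <= b -> Rabs (G t - g t) <= eps) ->
  ex_RInt g a b.
Proof.
  intros hab approx.
  assert (approximants : forall n : nat, {G : R -> R | ex_RInt G a b /\
             forall t, Rabs (G t - g t) <= / INR (S n)}).
  { intros n; apply constructive_indefinite_description.
    assert (hn : 0 < / INR (S n)) by (apply Rinv_0_lt_compat, lt_0_INR; lia).
    destruct (approx _ hn) as [G [hG hGg]].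
    (* [filterlim_RInt] needs uniform convergence on all of R: outside [a, b] use [g] itself *)
    exists (fun t => if Rle_dec a t then if Rle_dec t b then G t else g t else g t); split.
    - apply (ex_RInt_ext G); [| exact hG].
      intros t; rewrite Rmin_left, Rmax_right by lra; intros ht.
      destruct (Rle_dec a t); [destruct (Rle_dec t b) |]; lra.
    - intros t; destruct (Rle_dec a t), (Rle_dec t b); try apply hGg; try lra;
        rewrite Rminus_diag, Rabs_R0; lra. }
  set (Gn := fun n => proj1_sig (approximants n)).
  destruct (filterlim_RInt Gn a b eventually eventually_filter g (fun n => RInt (Gn n) a b))
    as [If [_ hIf]].
  - intros n; apply RInt_correct, (proj2_sig (approximants n)).
  - intros P [eps hP].
    destruct (archimed_cor1 eps (cond_pos eps)) as [N [hN hN0]].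
    exists N; intros n hn; apply hP; intros t.
    change (Rabs (Gn n t - g t) < eps).
    apply Rle_lt_trans with (/ INR (S n)); [apply (proj2_sig (approximants n)) |].
    apply Rle_lt_trans with (/ INR N); [| exact hN].
    apply Rinv_le_contravar; [apply lt_0_INR; lia | apply le_INR; lia].
  - exists If; exact hIf.
Qed.

Section ProductIntegrable.

Variables (h f : R -> R) (a b : R).
Hypothesis hf : ex_RInt f a b.

Lemma ex_RInt_mult_step_approx (M e d : R) : 0 < d ->
  (forall t, a <= t <= b -> Rabs (f t) <= M) ->
  (forall x y, a <= x <= b -> a <= y <= b -> Rabs (x - y) <= d -> Rabs (h x - h y) <= e) ->
  forall (n : nat) c, a <= c <= b -> c - a <= INR n * d ->
  exists G, ex_RInt G a c /\ forall t, a <= t <= c -> Rabs (G t - h t * f t) <= e * M.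
Proof.
  intros hd hM hh n; induction n as [| n IH]; intros c hc hcn.
  - exists (fun t => h t * f t); split.
    + replace c with a by (simpl in hcn; lra); apply ex_RInt_point.
    + intros t ht; rewrite Rminus_diag, Rabs_R0.
      assert (0 <= M) by (pose proof (hM a ltac:(lra)); pose proof (Rabs_pos (f a)); lra).
      assert (0 <= e).
      { pose proof (hh a a) as he; rewrite !Rminus_diag, Rabs_R0 in he; apply he; lra. }
      apply Rmult_le_pos; lra.
  - (* on the last piece, of length at most [d], [h] is frozen at its left end [c'] *)
    set (c' := Rmax a (c - d)).
    rewrite S_INR, Rmult_plus_distr_r, Rmult_1_l in hcn.
    assert (0 <= INR n * d) by (apply Rmult_le_pos; [apply pos_INR | lra]).
    assert (hc' : a <= c' <= c /\ c - c' <= d /\ c' - a <= INR n * d).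
    { unfold c'; destruct (Rle_dec a (c - d)); [rewrite Rmax_right | rewrite Rmax_left]; lra. }
    destruct (IH c') as [G [hG hGerr]]; [lra | lra |].
    exists (fun t => if Rle_dec t c' then G t else h c' * f t); split.
    + apply (ex_RInt_Chasles_0 _ a c' c); [lra | |].
      * apply (ex_RInt_ext G); [| exact hG].
        intros t; rewrite Rmin_left, Rmax_right by lra; intros ht.
        destruct (Rle_dec t c'); [reflexivity | lra].
      * apply (ex_RInt_ext (fun t => scal (h c') (f t))).
        { intros t; rewrite Rmin_left, Rmax_right by lra; intros ht.
          destruct (Rle_dec t c'); [lra | reflexivity]. }
        apply (@ex_RInt_scal R_NormedModule).
        apply (@ex_RInt_Chasles_1 R_CompleteNormedModule _ c' c b); [lra |].
        apply (@ex_RInt_Chasles_2 R_CompleteNormedModule _ a c' b); [lra | exact hf].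
    + intros t ht; destruct (Rle_dec t c'); [apply hGerr; lra |].
      replace (h c' * f t - h t * f t) with ((h c' - h t) * f t) by ring.
      rewrite Rabs_mult; apply Rmult_le_compat; try apply Rabs_pos.
      * apply hh; [lra | lra | rewrite Rabs_left1; lra].
      * apply hM; lra.
Qed.

Lemma ex_RInt_mult_of_unif_cont : a <= b ->
  (forall eps, 0 < eps -> exists d, 0 < d /\ forall x y, a <= x <= b -> a <= y <= b ->
     Rabs (x - y) <= d -> Rabs (h x - h y) <= eps) ->
  ex_RInt (fun t => h t * f t) a b.
Proof.
  intros hab hh.
  destruct (ex_RInt_ub f a b hf) as [M hM].
  rewrite Rmin_left, Rmax_right in hM by lra.
  change (forall t, a <= t <= b -> Rabs (f t) <= M) in hM.
  assert (M0 : 0 <= M) by (pose proof (hM a ltac:(lra)); pose proof (Rabs_pos (f a)); lra).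
  apply ex_RInt_of_uniform_approx; [exact hab |]; intros eps heps.
  set (e := eps / (M + 1)).
  assert (he : 0 < e) by (apply Rdiv_lt_0_compat; lra).
  destruct (hh e he) as [d [hd hhd]].
  destruct (INR_archimed d (b - a) hd) as [n hn].
  destruct (ex_RInt_mult_step_approx M e d hd hM hhd n b) as [G [hG hGerr]]; [lra | lra |].
  exists G; split; [exact hG |]; intros t ht.
  apply Rle_trans with (e * M); [apply hGerr; lra |].
  apply Rle_trans with (e * (M + 1)); [apply Rmult_le_compat_l; lra |].
  right; unfold e; field; lra.
Qed.

End ProductIntegrable.

Lemma ex_RInt_one_sub_rpow_mult (f : R -> R) (a : R) : 0 < a <= 1 -> ex_RInt f 0 1 ->
  ex_RInt (fun t => (1 - rpow t a) * f t) 0 1.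
Proof.
  intros ha hf; apply (ex_RInt_mult_of_unif_cont _ _ 0 1 hf); [lra |].
  intros eps heps; exists (rpow eps (/ a)); split; [rewrite rpow_pos by lra; apply exp_pos |].
  intros x y hx hy hxy.
  replace (1 - rpow x a - (1 - rpow y a)) with (rpow y a - rpow x a) by ring.
  rewrite Rabs_minus_sym.
  apply Rle_trans with (rpow (Rabs (x - y)) a); [apply rpow_Rabs_minus_le; lra |].
  apply Rle_trans with (rpow (rpow eps (/ a)) a).
  - apply rpow_le_compat; [lra | split; [apply Rabs_pos | exact hxy]].
  - rewrite rpow_rpow, Rinv_l, rpow_pos, Rmult_1_l, exp_ln; lra.
Qed.

Lemma RInt_scal_le (g k : R -> R) (a b p q : R) : a <= b -> ex_RInt g a b -> ex_RInt k a b ->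
  (forall t, a < t < b -> p * g t <= q * k t) -> p * RInt g a b <= q * RInt k a b.
Proof.
  intros hab hg hk hgk.
  replace (p * RInt g a b) with (RInt (fun t => p * g t) a b)
    by exact (@RInt_scal R_CompleteNormedModule g a b p hg).
  replace (q * RInt k a b) with (RInt (fun t => q * k t) a b)
    by exact (@RInt_scal R_CompleteNormedModule k a b q hk).
  apply RInt_le; [exact hab | apply (@ex_RInt_scal R_NormedModule) .. | exact hgk]; assumption.
Qed.

Lemma frac_le_of_cross (A1 A2 B1 B2 p q : R) :
  0 <= A1 -> 0 <= A2 -> 0 <= B1 -> 0 <= B2 -> 0 < p -> 0 < q ->
  q * A1 <= p * B1 -> p * B2 <= q * A2 -> 0 < A1 + A2 ->
  A1 / (A1 + A2) <= B1 / (B1 + B2).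
Proof.
  intros hA1 hA2 hB1 hB2 hp hq h1 h2 hA.
  destruct (Req_dec (B1 + B2) 0) as [hB | hB].
  - assert (A1 = 0) by nra.
    replace A1 with 0 by lra; replace B1 with 0 by lra.
    unfold Rdiv; rewrite !Rmult_0_l; lra.
  - assert (cross : A1 * B2 <= B1 * A2).
    { apply Rmult_le_reg_l with (p * q); [nra |].
      replace (p * q * (A1 * B2)) with ((q * A1) * (p * B2)) by ring.
      replace (p * q * (B1 * A2)) with ((p * B1) * (q * A2)) by ring.
      apply Rmult_le_compat; nra. }
    apply Rmult_le_reg_r with ((A1 + A2) * (B1 + B2)); [nra |].
    replace (A1 / (A1 + A2) * ((A1 + A2) * (B1 + B2))) with (A1 * (B1 + B2)) by (field; lra).
    replace (B1 / (B1 + B2) * ((A1 + A2) * (B1 + B2))) with (B1 * (A1 + A2)) by (field; lra).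
    nra.
Qed.

Lemma RInt_frac_le_of_crossing (g k : R -> R) (a c b p q : R) :
  a <= c <= b -> 0 < p -> 0 < q -> ex_RInt g a b -> ex_RInt k a b ->
  (forall t, a <= t <= b -> 0 <= g t) -> (forall t, a <= t <= b -> 0 <= k t) ->
  (forall t, a < t < c -> q * g t <= p * k t) ->
  (forall t, c < t < b -> p * k t <= q * g t) ->
  0 < RInt g a b ->
  RInt g a c / RInt g a b <= RInt k a c / RInt k a b.
Proof.
  intros hc hp hq hg hk g0 k0 below_c above_c hpos.
  assert (chasles : forall u, ex_RInt u a b ->
            ex_RInt u a c /\ ex_RInt u c b /\ RInt u a b = RInt u a c + RInt u c b).
  { intros u hu.
    assert (hac : ex_RInt u a c) by (apply (@ex_RInt_Chasles_1 R_CompleteNormedModule _ a c b); tauto).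
    assert (hcb : ex_RInt u c b) by (apply (@ex_RInt_Chasles_2 R_CompleteNormedModule _ a c b); tauto).
    repeat split; [exact hac | exact hcb |].
    symmetry; exact (@RInt_Chasles R_CompleteNormedModule u a c b hac hcb). }
  destruct (chasles g hg) as [hg1 [hg2 Eg]]; destruct (chasles k hk) as [hk1 [hk2 Ek]].
  rewrite Eg in hpos |- *; rewrite Ek.
  apply frac_le_of_cross with p q.
  - apply RInt_ge_0; [lra | exact hg1 | intros; apply g0; lra].
  - apply RInt_ge_0; [lra | exact hg2 | intros; apply g0; lra].
  - apply RInt_ge_0; [lra | exact hk1 | intros; apply k0; lra].
  - apply RInt_ge_0; [lra | exact hk2 | intros; apply k0; lra].
  - exact hp.
  - exact hq.
  - apply RInt_scal_le; [lra | exact hg1 | exact hk1 | exact below_c].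
  - apply RInt_scal_le; [lra | exact hk2 | exact hg2 | exact above_c].
  - exact hpos.
Qed.

Theorem lemma4 (f : R -> R) (delta alpha beta : R)
  (hf_nonneg : forall theta, 0 <= theta <= 1 -> 0 <= f theta)
  (hf_int : ex_RInt f 0 1)
  (hdelta : 0 < delta < 1)
  (hbeta : 0 < beta) (hba : beta < alpha) (halpha : alpha <= 1)
  (hpos : 0 < RInt (fun theta => (1 - rpow theta alpha) * f theta) 0 1) :
  RInt (fun theta => (1 - rpow theta alpha) * f theta) 0 delta
    / RInt (fun theta => (1 - rpow theta alpha) * f theta) 0 1
  <= RInt (fun theta => (1 - rpow theta beta) * f theta) 0 delta
    / RInt (fun theta => (1 - rpow theta beta) * f theta) 0 1.
Proof.
  assert (weight_ge_0 : forall s t, 0 < s -> 0 <= t <= 1 -> 0 <= (1 - rpow t s) * f t).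
  { intros s t hs ht; apply Rmult_le_pos; [pose proof (rpow_le_1 t s hs ht) | apply hf_nonneg]; lra. }
  apply RInt_frac_le_of_crossing with (1 - rpow delta alpha) (1 - rpow delta beta).
  - lra.
  - pose proof (rpow_lt_1 delta alpha); lra.
  - pose proof (rpow_lt_1 delta beta); lra.
  - apply ex_RInt_one_sub_rpow_mult; [lra | exact hf_int].
  - apply ex_RInt_one_sub_rpow_mult; [lra | exact hf_int].
  - intros t ht; apply weight_ge_0; lra.
  - intros t ht; apply weight_ge_0; lra.
  - intros t ht; pose proof (hf_nonneg t ltac:(lra)).
    pose proof (one_sub_rpow_ratio_antitone t delta alpha beta ltac:(lra) ltac:(lra) ltac:(lra)).
    nra.
  - intros t ht; pose proof (hf_nonneg t ltac:(lra)).
    pose proof (one_sub_rpow_ratio_antitone delta t alpha beta ltac:(lra) ltac:(lra) ltac:(lra)).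
    nra.
  - exact hpos.
Qed.
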